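(* Let $\Sigma$ be a finite relational signature and let $\mathcal{C}$ and $\mathcal{K}$ be non-empty classes of finite $\Sigma$-structures. (a) $\mathcal{C}\cup\mathcal{K}$ is MSO-orderable if, and only if, both $\mathcal{C}$ and $\mathcal{K}$ are MSO-orderable. (b) The class $\mathcal{C}\oplus\mathcal{K}:=\{\mathfrak{A}\oplus\mathfrak{B} : \mathfrak{A}\in\mathcal{C},\ \mathfrak{B}\in\mathcal{K}\}$ is MSO-orderable if, and only if, both $\mathcal{C}$ and $\mathcal{K}$ are MSO-orderable.
   Context: Structures are finite, purely relational (universe may be empty). $\mathfrak{A}\oplus\mathfrak{B}$ denotes the disjoint union of $\mathfrak{A}$ and $\mathfrak{B}$. An MSO-formula $\varphi(x,y;Z_0,\dots,Z_{n-1})$ (two free first-order variables, $n$ free set variables called parameters) defines an order on a class $\mathcal{C}$ of structures if for every non-empty $\mathfrak{A}\in\mathcal{C}$ there are sets $P_0,\dots,P_{n-1}\subseteq A$ such that $\{(a,b) : \mathfrak{A}\models\varphi(a,b;\bar P)\}$ is a linear order on $A$. A class is MSO-orderable if some MSO-formula defines an order on it. *)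

From HB Require Import structures.
From mathcomp Require Import all_boot.
Set Implicit Arguments. Unset Strict Implicit. Unset Printing Implicit Defensive.

Record signature := Signature { sym : finType; arity : sym -> nat }.

(* Finite Sigma-structure: a (possibly empty) finite universe and, for each
   relation symbol R, the set of (arity R)-tuples in the relation. *)
Record structure (S : signature) := Structure {
  carrier : finType;
  rel : forall R : sym S, pred ((arity R).-tuple carrier) }.

Definition dunion S (A B : structure S) : structure S :=
  @Structure S (carrier A + carrier B)%type
    (fun R t =>
       [exists ta : (arity R).-tuple (carrier A),
          (t == map_tuple inl ta) && rel ta] ||
       [exists tb : (arity R).-tuple (carrier B),
          (t == map_tuple inr tb) && rel tb]).

Inductive formula (S : signature) :=
| FRel (R : sym S) (xs : (arity R).-tuple nat)
| FEq (i j : nat)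
| FIn (i k : nat)
| FNot (f : formula S)
| FAnd (f g : formula S)
| FOr (f g : formula S)
| FEx1 (i : nat) (f : formula S)
| FEx2 (k : nat) (f : formula S).

Definition upd (T : Type) (v : nat -> T) (i : nat) (a : T) : nat -> T :=
  fun j => if j == i then a else v j.

Fixpoint sat S (A : structure S) (v : nat -> carrier A)
    (V : nat -> {set carrier A}) (f : formula S) : Prop :=
  match f with
  | FRel R xs => rel (map_tuple v xs)
  | FEq i j => v i = v j
  | FIn i k => v i \in V k
  | FNot g => ~ sat v V g
  | FAnd g h => sat v V g /\ sat v V h
  | FOr g h => sat v V g \/ sat v V h
  | FEx1 i g => exists a, sat (upd v i a) V g
  | FEx2 k g => exists P, sat v (upd V k P) g
  end.

Fixpoint fv1 S (f : formula S) : seq nat :=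
  match f with
  | FRel _ xs => tval xs
  | FEq i j => [:: i; j]
  | FIn i _ => [:: i]
  | FNot g => fv1 g
  | FAnd g h | FOr g h => fv1 g ++ fv1 h
  | FEx1 i g => filter (fun j => j != i) (fv1 g)
  | FEx2 _ g => fv1 g
  end.

Fixpoint fv2 S (f : formula S) : seq nat :=
  match f with
  | FRel _ _ | FEq _ _ => [::]
  | FIn _ k => [:: k]
  | FNot g => fv2 g
  | FAnd g h | FOr g h => fv2 g ++ fv2 h
  | FEx1 _ g => fv2 g
  | FEx2 k g => filter (fun j => j != k) (fv2 g)
  end.

(* phi(x,y; Z_0..Z_{n-1}) : free FO variables among x = x_0, y = x_1,
   free set variables among X_0..X_{n-1}. *)
Definition has_free_vars S (phi : formula S) (n : nat) : bool :=
  all (fun i => i < 2) (fv1 phi) && all (fun k => k < n) (fv2 phi).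

Definition phi_rel S (A : structure S) (phi : formula S)
    (Ps : seq {set carrier A}) (a b : carrier A) : Prop :=
  sat (fun i => if i == 0 then a else b) (fun k => nth set0 Ps k) phi.

Definition linear_order (T : Type) (r : T -> T -> Prop) : Prop :=
  (forall a, r a a) /\
  (forall a b, r a b -> r b a -> a = b) /\
  (forall a b c, r a b -> r b c -> r a c) /\
  (forall a b, r a b \/ r b a).

Definition sclass S := structure S -> Prop.

Definition defines_order S (phi : formula S) (n : nat) (C : sclass S) : Prop :=
  forall A : structure S, C A -> (exists a : carrier A, True) ->
    exists Ps : seq {set carrier A}, size Ps = n /\
      linear_order (phi_rel phi Ps).

Definition MSO_orderable S (C : sclass S) : Prop :=
  exists (phi : formula S) (n : nat), has_free_vars phi n /\ defines_order phi n C.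

Definition class_union S (C K : sclass S) : sclass S := fun X => C X \/ K X.

Definition class_sum S (C K : sclass S) : sclass S :=
  fun X => exists A B, C A /\ K B /\ X = dunion A B.

(* The forward direction for the union is monotonicity under subclasses. The
   two backward directions rest on one construction: if every structure of a
   class is a disjoint union of a structure ordered by phi1 and one ordered by
   phi2, then the "sum formula" orders it by putting the left part (guessed as
   a parameter X_0) first, ordered by phi1 relativized to X_0, then the rest,
   ordered by phi2 relativized to the complement. Nullary relations cannot be
   relativized, so their truth values in the summands are passed as extra
   non-emptiness flags among the parameters. A structure of C U K is the
   disjoint union of itself with the empty structure.

   The forward direction for sums fixes a structure B of K (resp. C): a formula
   ordering A (+) B is translated into one about A in which the finite structure
   B is hardwired (quantifiers over B become finite disjunctions); the unknown
   B-parts of the parameters are selected among all possibilities by one more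
   flag parameter. *)
From Pilot Require Import Defs.
From HB Require Import structures.
From mathcomp Require Import all_boot.
From Stdlib Require Import Setoid.
Set Implicit Arguments. Unset Strict Implicit. Unset Printing Implicit Defensive.

(* The relations of a structure (the name rel alone is ssrbool's type of relations). *)
Notation srel := Pilot.Defs.rel.

Definition FF S : formula S := FEx1 0 (FNot (FEq S 0 0)).
Definition cst S (b : bool) : formula S := if b then FNot (FF S) else FF S.
Arguments cst S b : simpl never.

Lemma sat_cst S (A : structure S) v V b : sat (A := A) v V (cst S b) <-> b.
Proof.
have sat_FF : ~ sat (A := A) v V (FF S) by case=> a; apply.
by case: b => /=; split=> //; apply: sat_FF.
Qed.

Lemma fv_cst S b : fv1 (cst S b) = [::] /\ fv2 (cst S b) = [::].
Proof. by case: b. Qed.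

Definition nonempty S (k : nat) : formula S := FEx1 0 (FIn S 0 k).

Definition FBigOr S (T : finType) (F : T -> formula S) : formula S :=
  foldr (@FOr S) (cst S false) (map F (enum T)).

Lemma sat_FBigOr S (A : structure S) v V (T : finType) (F : T -> formula S) :
  sat (A := A) v V (FBigOr F) <-> exists x, sat v V (F x).
Proof.
suff sat_foldr (s : seq T) : sat (A := A) v V (foldr (@FOr S) (cst S false) (map F s))
    <-> exists2 x, x \in s & sat v V (F x).
  by rewrite sat_foldr; split=> [[x _ Hx]|[x Hx]]; exists x; rewrite ?mem_enum.
elim: s => [|y s IH]; first by split=> [/sat_cst|[]].
rewrite /= IH; split=> [[Hy|[x xs Hx]]|[x]]; first by exists y; rewrite ?mem_head.
  by exists x; rewrite // inE xs orbT.
by rewrite inE => /orP [/eqP->|xs Hx]; [left|right; exists x].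
Qed.

Lemma fv_FBigOr S (T : finType) (F : T -> formula S) x :
  (x \in fv1 (FBigOr F) -> exists y, x \in fv1 (F y)) /\
  (x \in fv2 (FBigOr F) -> exists y, x \in fv2 (F y)).
Proof.
rewrite /FBigOr; elim: (enum T) => [|y s [IH1 IH2]] /=; first by [].
by split; rewrite mem_cat => /orP [Hy|]; by [exists y | auto].
Qed.

Lemma upd_same (T : Type) (v : nat -> T) i a : upd v i a i = a.
Proof. by rewrite /upd eqxx. Qed.

Lemma upd_comp (A D : Type) (e : A -> D) (v : nat -> A) (w : nat -> D) :
  (forall j, w j = e (v j)) -> forall i a j, upd w i (e a) j = e (upd v i a j).
Proof. by move=> Hw i a j; rewrite /upd; case: eqP. Qed.

Definition linear_on (T : Type) (p : pred T) (r : T -> T -> Prop) : Prop :=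
  [/\ forall a, p a -> r a a,
      forall a b, p a -> p b -> r a b -> r b a -> a = b,
      forall a b c, p a -> p b -> p c -> r a b -> r b c -> r a c &
      forall a b, p a -> p b -> r a b \/ r b a].

Lemma linear_on_image (A D : Type) (e : A -> D) (p : pred D)
    (rA : A -> A -> Prop) (r : D -> D -> Prop) :
  (forall d, p d -> exists a, d = e a) -> (forall a b, r (e a) (e b) <-> rA a b) ->
  linear_order rA -> linear_on p r.
Proof.
move=> onto Hr [refl [anti [trans total]]]; split.
- by move=> _ /onto [a ->]; apply/Hr.
- by move=> _ _ /onto [a ->] /onto [b ->] /Hr ab /Hr ba; rewrite (anti a b).
- move=> _ _ _ /onto [a ->] /onto [b ->] /onto [c ->] /Hr ab /Hr bc.
  exact/Hr/(trans a b c).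
- by move=> _ _ /onto [a ->] /onto [b ->]; rewrite !Hr.
Qed.

Lemma linear_lex_sum (T : Type) (p : pred T) (r1 r2 r : T -> T -> Prop) :
  linear_on p r1 -> linear_on (fun a => ~~ p a) r2 ->
  (forall a b, r a b <-> [\/ p a /\ ~~ p b, [/\ p a, p b & r1 a b]
                           | [/\ ~~ p a, ~~ p b & r2 a b]]) ->
  linear_order r.
Proof.
move=> [R1 A1 T1 L1] [R2 A2 T2 L2] Hr.
have p_first a b : r a b -> p b -> p a by move/Hr=> [[]|[]|[_ /negP]].
have in_p a b : p a -> p b -> r a b -> r1 a b.
  by move=> pa pb /Hr [[_ /negP]|[]|[/negP]].
have in_np a b : ~~ p a -> ~~ p b -> r a b -> r2 a b.
  by move=> /negP pa pb /Hr [[]|[]|[]].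
split; [|split; [|split]].
- move=> a; apply/Hr; case: (boolP (p a)) => pa.
    by apply: Or32; split=> //; apply: R1.
  by apply: Or33; split=> //; apply: R2.
- move=> a b ab ba; case: (boolP (p a)) => pa.
    have pb := p_first _ _ ba pa; exact: A1 (in_p _ _ pa pb ab) (in_p _ _ pb pa ba).
  have /negP pb : ~ p b by move/(p_first _ _ ab); apply/negP.
  exact: A2 (in_np _ _ pa pb ab) (in_np _ _ pb pa ba).
- move=> a b c ab bc; apply/Hr; case: (boolP (p c)) => pc.
    have pb := p_first _ _ bc pc; have pa := p_first _ _ ab pb.
    by apply: Or32; split; last exact: T1 (in_p _ _ pa pb ab) (in_p _ _ pb pc bc).
  case: (boolP (p a)) => pa; first by apply: Or31.
  have /negP pb : ~ p b by move/(p_first _ _ ab); apply/negP.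
  by apply: Or33; split; last exact: T2 (in_np _ _ pa pb ab) (in_np _ _ pb pc bc).
- move=> a b; rewrite !Hr; case: (boolP (p a)) => pa; case: (boolP (p b)) => pb.
  + by case: (L1 a b pa pb) => ?; [left|right]; apply: Or32.
  + by left; apply: Or31.
  + by right; apply: Or31.
  + by case: (L2 a b pa pb) => ?; [left|right]; apply: Or33.
Qed.

Lemma linear_order_pullback (A D : Type) (e : A -> D) (rA : A -> A -> Prop)
    (rD : D -> D -> Prop) :
  injective e -> linear_order rD -> (forall a b, rA a b <-> rD (e a) (e b)) ->
  linear_order rA.
Proof.
move=> e_inj [refl [anti [trans total]]] Hr; split; [|split; [|split]].
- by move=> a; apply/Hr.
- by move=> a b /Hr ab /Hr ba; apply: e_inj; apply: anti.
- by move=> a b c /Hr ab /Hr bc; apply/Hr; apply: trans ab bc.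
- by move=> a b; rewrite !Hr.
Qed.

Lemma linear_order_empty (T : Type) (r : T -> T -> Prop) : (T -> False) -> linear_order r.
Proof. by move=> none; split; [|split; [|split]] => a; case: (none a). Qed.

Definition splits S (D A B : structure S) (e : carrier A -> carrier D)
    (f : carrier B -> carrier D) : Prop :=
  [/\ injective e, injective f, forall a b, e a <> f b,
      forall d, (exists a, d = e a) \/ (exists b, d = f b) &
      forall R (t : (arity R).-tuple (carrier D)), srel t <->
        (exists ta, t = map_tuple e ta /\ srel ta) \/
        (exists tb, t = map_tuple f tb /\ srel tb)].
Arguments splits {S} D A B e f.

Lemma splits_sym S (D A B : structure S) e f :
  splits D A B e f -> splits D B A f e.
Proof.
case=> ei fi dis cov Hrel; split=> // [a b /esym /dis //|d|R t].
  by case: (cov d); auto.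
by rewrite Hrel; split; case; auto.
Qed.

Lemma dunion_splits S (A B : structure S) : splits (dunion A B) A B inl inr.
Proof.
split=> [x y [] //|x y [] //|//|[a|b]|R t /=]; [by left; exists a|by right; exists b|].
split=> [/orP [] /existsP [u /andP [/eqP -> ?]]|[] [u [-> ?]]].
- by left; exists u.
- by right; exists u.
- by apply/orP; left; apply/existsP; exists u; rewrite eqxx.
- by apply/orP; right; apply/existsP; exists u; rewrite eqxx.
Qed.

Definition empty_structure S : structure S := @Structure S void (fun _ _ => false).

Lemma splits_empty S (A : structure S) :
  splits A A (empty_structure S) id (@of_void _).
Proof.
split=> [x y //|[]|_ []|d|R t]; first by left; exists d.
have map_id_tuple u : map_tuple id u = u :> (arity R).-tuple _.
  by apply: val_inj; rewrite /= map_id.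
split=> [Ht|[[u [-> ]]|[u [_ //]]]]; last by rewrite map_id_tuple.
by left; exists t; rewrite map_id_tuple.
Qed.

Section SplitRelations.
Variables (S : signature) (D A B : structure S).
Variables (e : carrier A -> carrier D) (f : carrier B -> carrier D).
Hypothesis hsplit : splits D A B e f.

Lemma splits_rel R (t : (arity R).-tuple (carrier A)) :
  0 < arity R -> srel (map_tuple e t) = srel t.
Proof.
case: hsplit => ei _ dis _ Hrel ar; apply/idP/idP => [/Hrel|Ht]; last first.
  by apply/Hrel; left; exists t.
case=> [[u [/(congr1 val) /= /(inj_map ei) /val_inj -> //]]|].
case=> u [/(congr1 val) /= Etu _].
have : 0 < size t by rewrite size_tuple.
by move: Etu; case: (tval t) (tval u) => [|x ?] [|y ?] // [/dis].
Qed.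

Lemma splits_set (P : {set carrier A}) (Q : {set carrier B}) :
  (forall a, (e a \in e @: P :|: f @: Q) = (a \in P)) /\
  (forall b, (f b \in e @: P :|: f @: Q) = (b \in Q)).
Proof.
case: hsplit => ei fi dis _ _.
split=> x; rewrite inE ?(mem_imset _ _ ei) ?(mem_imset _ _ fi).
  by case: (x \in P) => //=; apply/imsetP=> [[b _ /dis]].
by case: (x \in Q); rewrite ?orbT ?orbF //; apply/imsetP=> [[a _ /esym /dis]].
Qed.

End SplitRelations.

Section Relativization.
Variables (S : signature) (memf : nat -> formula S) (flag : sym S -> formula S).
Variable sh : nat.

Definition subset_part (k : nat) : formula S :=
  FNot (FEx1 0 (FAnd (FIn S 0 k) (FNot (memf 0)))).

(* Relativization of f to the part defined by memf (memf i says "x_i lies in the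
   part"): quantifiers range over the part, the set variable X_k becomes
   X_(k + sh), and each nullary relation symbol R becomes the sentence flag R
   (in a disjoint union, nullary relations cannot be split between the parts). *)
Fixpoint relativize (f : formula S) : formula S :=
  match f with
  | FRel R xs => if arity R == 0 then flag R else FRel xs
  | FEq i j => FEq S i j
  | FIn i k => FIn S i (k + sh)
  | FNot g => FNot (relativize g)
  | FAnd g h => FAnd (relativize g) (relativize h)
  | FOr g h => FOr (relativize g) (relativize h)
  | FEx1 i g => FEx1 i (FAnd (memf i) (relativize g))
  | FEx2 k g => FEx2 (k + sh) (FAnd (subset_part (k + sh)) (relativize g))
  end.

Lemma relativize_fv1 :
  (forall i x, x \in fv1 (memf i) -> x = i) -> (forall R, fv1 (flag R) = [::]) ->
  forall f x, x \in fv1 (relativize f) -> x \in fv1 f.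
Proof.
move=> mem_fv flag_fv.
elim=> [R xs|i j|i k|g IH|g IHg h IHh|g IHg h IHh|i g IH|k g IH] x //=.
- by case: eqP; rewrite ?flag_fv.
- exact: IH.
- by rewrite !mem_cat => /orP [/IHg|/IHh] ->; rewrite ?orbT.
- by rewrite !mem_cat => /orP [/IHg|/IHh] ->; rewrite ?orbT.
- rewrite !mem_filter mem_cat => /andP [xi /orP [/mem_fv xe|/IH ->]].
    by rewrite xe eqxx in xi.
  by rewrite xi.
- rewrite mem_cat => /orP [|/IH] //.
  by rewrite mem_filter => /andP [x0 /mem_fv x0']; rewrite x0' eqxx in x0.
Qed.

Lemma relativize_fv2 :
  (forall i x, x \in fv2 (memf i) -> x < sh) ->
  (forall R x, x \in fv2 (flag R) -> x < sh) ->
  forall f x, x \in fv2 (relativize f) -> x < sh \/ exists2 k, k \in fv2 f & x = k + sh.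
Proof.
move=> mem_fv flag_fv.
elim=> [R xs|i j|i k|g IH|g IHg h IHh|g IHg h IHh|i g IH|k g IH] x //=.
- by case: eqP => // _ /flag_fv; left.
- by rewrite inE => /eqP ->; right; exists k; rewrite ?inE.
- exact: IH.
- by rewrite !mem_cat => /orP [/IHg|/IHh] [->|[k kin ->]]; auto; right;
    exists k; rewrite // mem_cat kin ?orbT.
- by rewrite !mem_cat => /orP [/IHg|/IHh] [->|[k kin ->]]; auto; right;
    exists k; rewrite // mem_cat kin ?orbT.
- by rewrite mem_cat => /orP [/mem_fv ->|/IH]; [left|].
- rewrite eqxx /= mem_filter mem_cat => /andP [xk /orP [/mem_fv|/IH]]; first by left.
  case=> [|[j jin xe]]; first by left.
  right; exists j => //; rewrite mem_filter jin andbT.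
  by apply: contraNneq xk => jk; rewrite xe jk.
Qed.

Section Semantics.
Variables (A D : structure S) (e : carrier A -> carrier D) (P : pred (carrier D)).
Variable Wb : nat -> {set carrier D}.

Definition agrees (W : nat -> {set carrier D}) : Prop := forall k, k < sh -> W k = Wb k.

Hypothesis e_inj : injective e.
Hypothesis P_image : forall d, P d <-> exists a, d = e a.
Hypothesis memf_sat : forall i w W, agrees W -> (sat w W (memf i) <-> P (w i)).
Hypothesis flag_sat : forall R (t : (arity R).-tuple (carrier A)) w W,
  arity R = 0 -> agrees W -> (sat w W (flag R) <-> srel t).
Hypothesis e_rel : forall R (t : (arity R).-tuple (carrier A)),
  0 < arity R -> srel (map_tuple e t) = srel t.

Lemma agrees_upd W : agrees W -> forall k Q, agrees (upd W (k + sh) Q).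
Proof.
move=> HW k Q j jsh; rewrite /upd ifN ?HW //.
by apply: contraTneq jsh => ->; rewrite -leqNgt leq_addl.
Qed.

Lemma sat_subset_part w W k : agrees W ->
  sat w W (subset_part k) <-> forall d, d \in W k -> P d.
Proof.
move=> HW; split=> [Hsub d dk|Hsub [d [dk]]].
  case: (boolP (P d)) => // nPd; case: Hsub; exists d; split=> //.
  by move/memf_sat => /(_ HW); apply/negP.
by apply; apply/memf_sat=> //; apply: Hsub.
Qed.

Lemma image_preimage (Q : {set carrier D}) :
  (forall d, d \in Q -> P d) -> Q = e @: (e @^-1: Q).
Proof.
move=> QP; apply/setP=> d; apply/idP/imsetP=> [dQ|[a]]; last by rewrite inE => ? ->.
by have [a da] := proj1 (P_image d) (QP d dQ); exists a; rewrite // inE -da.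
Qed.

Lemma relativize_sat f (v : nat -> carrier A) (V : nat -> {set carrier A})
    (w : nat -> carrier D) (W : nat -> {set carrier D}) :
  (forall i, w i = e (v i)) -> agrees W ->
  (forall k, k \in fv2 f -> W (k + sh) = e @: V k) ->
  (sat w W (relativize f) <-> sat v V f).
Proof.
elim: f v V w W => [R xs|i j|i k|g IH|g IHg h IHh|g IHg h IHh|i g IH|k g IH]
  v V w W Hw HW HV /=.
- case: eqP => [a0|/eqP ar] /=; first exact: flag_sat.
  have -> : map_tuple w xs = map_tuple e (map_tuple v xs).
    by apply: val_inj; rewrite /= -map_comp; apply: eq_map => x; rewrite Hw.
  by rewrite e_rel // lt0n.
- by rewrite !Hw; split=> [/e_inj|->].
- by rewrite Hw HV ?inE // (mem_imset _ _ e_inj).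
- by rewrite (IH v V w W).
- by rewrite (IHg v V w W) ?(IHh v V w W) // => k kin; apply: HV;
    rewrite mem_cat kin ?orbT.
- by rewrite (IHg v V w W) ?(IHh v V w W) // => k kin; apply: HV;
    rewrite mem_cat kin ?orbT.
- split=> [[d [/memf_sat Pd]]|[a Ha]].
    have /P_image [a ->] : P d by rewrite -[d](upd_same w i d) Pd.
    by move/IH=> Ha; exists a; apply: Ha => //; exact: upd_comp Hw i a.
  exists (e a); split.
    by apply/memf_sat => //; apply/P_image; exists a; rewrite upd_same.
  by apply/(IH (upd v i a) V) => //; exact: upd_comp Hw i a.
- have HV' (Q : {set carrier A}) j :
      j \in fv2 g -> upd W (k + sh) (e @: Q) (j + sh) = e @: upd V k Q j.
    rewrite /upd eqn_add2r; case: eqP => // /eqP jk jin.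
    by apply: HV; rewrite mem_filter jk.
  split=> [[Q [/sat_subset_part QP]]|[Q Hg]].
    rewrite upd_same in QP; rewrite (image_preimage (QP (agrees_upd HW _ _))).
    move/IH=> Hg; exists (e @^-1: Q).
    by apply: Hg => //; [exact: agrees_upd HW _ _ | exact: HV'].
  exists (e @: Q); split; last first.
    by apply/(IH v (upd V k Q)) => //; [exact: agrees_upd HW _ _ | exact: HV'].
  apply/sat_subset_part; first exact: agrees_upd HW _ _.
  by rewrite upd_same => _ /imsetP [a _ ->]; apply/P_image; exists a.
Qed.

End Semantics.
End Relativization.

(* The formula ordering a disjoint union: the left part (the set X_0) comes
   first, ordered by phi1 relativized to it, then the right part, ordered by
   phi2 relativized to it. The parameters X_1 .. X_(ngadgets S - 1) are
   non-emptiness flags for the nullary relations of the two summands, then come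
   the n1 parameters of phi1 and the parameters of phi2. *)
Definition ngadgets S : nat := 1 + #|sym S| + #|sym S|.
Definition in_left S (i : nat) : formula S := FIn S i 0.
Definition in_right S (i : nat) : formula S := FNot (FIn S i 0).
Definition flag_left S (R : sym S) : formula S := nonempty S (1 + enum_rank R).
Definition flag_right S (R : sym S) : formula S :=
  nonempty S (1 + #|sym S| + enum_rank R).

Definition sum_formula S (phi1 : formula S) (n1 : nat) (phi2 : formula S) : formula S :=
  FOr (FAnd (in_left S 0) (in_right S 1))
   (FOr (FAnd (FAnd (in_left S 0) (in_left S 1))
              (relativize (in_left S) (@flag_left S) (ngadgets S) phi1))
        (FAnd (FAnd (in_right S 0) (in_right S 1))
              (relativize (in_right S) (@flag_right S) (ngadgets S + n1) phi2))).

Lemma rank_lt (T : finType) (x : T) : enum_rank x < #|T|.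
Proof. by case: (enum_rank x). Qed.

Lemma flag_left_lt S (R : sym S) : 1 + enum_rank R < ngadgets S.
Proof. by rewrite /ngadgets -addnA ltn_add2l ltn_addr ?rank_lt. Qed.

Lemma flag_right_lt S (R : sym S) : 1 + #|sym S| + enum_rank R < ngadgets S.
Proof. by rewrite /ngadgets ltn_add2l rank_lt. Qed.

Lemma sum_formula_free S (phi1 phi2 : formula S) n1 n2 :
  has_free_vars phi1 n1 -> has_free_vars phi2 n2 ->
  has_free_vars (sum_formula phi1 n1 phi2) (ngadgets S + n1 + n2).
Proof.
move=> /andP [/allP fv11 /allP fv12] /andP [/allP fv21 /allP fv22].
have mem1 i x : x \in fv1 (in_left S i) -> x = i by rewrite inE => /eqP.
have mem1' i x : x \in fv1 (in_right S i) -> x = i by rewrite inE => /eqP.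
have mem2 i x : x \in fv2 (in_left S i) -> x < ngadgets S by rewrite inE => /eqP ->.
have mem2' i x : x \in fv2 (in_right S i) -> x < ngadgets S + n1.
  by rewrite inE => /eqP ->; rewrite ltn_addr.
have flag2 (R : sym S) x : x \in fv2 (flag_left R) -> x < ngadgets S.
  by rewrite inE => /eqP ->; apply: flag_left_lt.
have flag2' (R : sym S) x : x \in fv2 (flag_right R) -> x < ngadgets S + n1.
  by rewrite inE => /eqP ->; rewrite ltn_addr ?flag_right_lt.
apply/andP; split; apply/allP=> x /=; rewrite !(inE, mem_cat).
- case: (ltnP x 2) => // x2; rewrite (gtn_eqF x2) (gtn_eqF (ltnW x2)) /=.
  case/orP=> [/(relativize_fv1 (flag := @flag_left S) mem1 (fun R => erefl))/fv11|];
    last move/(relativize_fv1 (flag := @flag_right S) mem1' (fun R => erefl))/fv21;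
    by rewrite ltnNge x2.
- case: (posnP x) => [-> //|_] /=.
  case/orP=> [/(relativize_fv2 mem2 flag2) [xn|[k /fv12 kn ->]]|].
  + by rewrite -addnA ltn_addr.
  + by rewrite addnC -addnA ltn_add2l ltn_addr.
  case/(relativize_fv2 mem2' flag2')=> [xn|[k /fv22 kn ->]]; first by rewrite ltn_addr.
  by rewrite addnC ltn_add2l.
Qed.

Definition holds0 S (A : structure S) (R : sym S) : bool :=
  [exists t : (arity R).-tuple (carrier A), srel t].

Lemma holds0E S (A : structure S) R (t : (arity R).-tuple (carrier A)) :
  arity R = 0 -> holds0 A R = srel t.
Proof.
move=> ar0; apply/existsP/idP=> [[u]|]; last by exists t.
suff -> : u = t by [].
have ut : size u = 0 /\ size t = 0 by rewrite !size_tuple.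
by apply: val_inj => /=; move: ut; case: (tval u) (tval t) => [|??] [|??] // [].
Qed.

Definition flagset (T : finType) (b : bool) : {set T} := if b then setT else set0.

Lemma flagsetP (T : finType) (x0 : T) b : (exists x, x \in flagset T b) <-> b.
Proof.
case: b; split=> //; first by exists x0; rewrite inE.
by case=> x; rewrite inE.
Qed.

Section SumOrder.
Variables (S : signature) (D A B : structure S).
Variables (e : carrier A -> carrier D) (f : carrier B -> carrier D).
Hypothesis hsplit : splits D A B e f.
Variables (phi1 phi2 : formula S) (n1 n2 : nat).
Variables (Ps1 : seq {set carrier A}) (Ps2 : seq {set carrier B}).

Definition left_part : {set carrier D} := e @: setT.
Definition sum_gadgets : seq {set carrier D} :=
  left_part :: [seq flagset _ (holds0 A R) | R <- enum (sym S)]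
            ++ [seq flagset _ (holds0 B R) | R <- enum (sym S)].
Definition sum_params : seq {set carrier D} :=
  sum_gadgets ++ mkseq (fun k => e @: nth set0 Ps1 k) n1
              ++ mkseq (fun k => f @: nth set0 Ps2 k) n2.

Local Notation W := (nth set0 sum_params).

Lemma size_sum_gadgets : size sum_gadgets = ngadgets S.
Proof. by rewrite /= size_cat !size_map -enumT -cardT. Qed.

Lemma size_sum_params : size sum_params = ngadgets S + n1 + n2.
Proof. by rewrite !size_cat size_sum_gadgets !size_mkseq addnA. Qed.

Lemma sum_params_gadget k : k < ngadgets S -> W k = nth set0 sum_gadgets k.
Proof. by move=> kn; rewrite nth_cat size_sum_gadgets kn. Qed.

Lemma sum_params_left k : k < n1 -> W (k + ngadgets S) = e @: nth set0 Ps1 k.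
Proof.
move=> kn; rewrite nth_cat size_sum_gadgets ltnNge leq_addl /= addnK.
by rewrite nth_cat size_mkseq kn nth_mkseq.
Qed.

Lemma sum_params_right k : k < n2 -> W (k + (ngadgets S + n1)) = f @: nth set0 Ps2 k.
Proof.
move=> kn; rewrite addnCA nth_cat size_sum_gadgets ltnNge leq_addr /= addKn.
by rewrite nth_cat size_mkseq ltnNge leq_addl /= addnK nth_mkseq.
Qed.

Lemma sum_params_flag_left R : W (1 + enum_rank R) = flagset _ (holds0 A R).
Proof.
rewrite sum_params_gadget ?flag_left_lt // /sum_gadgets /= add0n nth_cat size_map.
by rewrite -cardT rank_lt (nth_map R) -?cardT ?rank_lt // nth_enum_rank.
Qed.

Lemma sum_params_flag_right R :
  W (1 + #|sym S| + enum_rank R) = flagset _ (holds0 B R).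
Proof.
rewrite sum_params_gadget ?flag_right_lt // /sum_gadgets /= add0n nth_cat size_map.
by rewrite -cardT ltnNge leq_addr /= addKn (nth_map R) -?cardT ?rank_lt // nth_enum_rank.
Qed.

Lemma left_partP d : d \in left_part <-> exists a, d = e a.
Proof. by split=> [/imsetP [a _ ->]|[a ->]]; [exists a|apply: imset_f]. Qed.

Lemma right_partP d : d \notin left_part <-> exists b, d = f b.
Proof.
case: hsplit => _ _ dis cov _; rewrite -(rwP negP) left_partP.
split=> [nl|[b -> [a /esym /dis //]]].
by case: (cov d) => // [[a da]]; case: nl; exists a.
Qed.

Definition left_rel (x y : carrier D) : Prop :=
  sat (fun i => if i == 0 then x else y) W
      (relativize (in_left S) (@flag_left S) (ngadgets S) phi1).
Definition right_rel (x y : carrier D) : Prop :=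
  sat (fun i => if i == 0 then x else y) W
      (relativize (in_right S) (@flag_right S) (ngadgets S + n1) phi2).

Lemma left_rel_sat : has_free_vars phi1 n1 ->
  forall a b, left_rel (e a) (e b) <-> phi_rel phi1 Ps1 a b.
Proof.
case: hsplit => ei _ _ _ _ /andP [_ /allP fv2n] a b.
apply: (relativize_sat (e := e) (P := mem left_part)) => //.
- exact: left_partP.
- by move=> i w W' HW; rewrite /= HW.
- move=> R t w W' ar0 HW; rewrite /= HW ?flag_left_lt // sum_params_flag_left.
  by rewrite (flagsetP (e a)) (holds0E t ar0).
- exact: splits_rel hsplit.
- by move=> i; case: eqP.
- by move=> k /fv2n kn; rewrite sum_params_left.
Qed.

Lemma right_rel_sat : has_free_vars phi2 n2 ->
  forall a b, right_rel (f a) (f b) <-> phi_rel phi2 Ps2 a b.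
Proof.
case: hsplit => _ fi _ _ _ /andP [_ /allP fv2n] a b.
apply: (relativize_sat (e := f) (P := fun d => d \notin left_part)) => //.
- exact: right_partP.
- by move=> i w W' HW; rewrite /= HW // -(rwP negP).
- move=> R t w W' ar0 HW.
  rewrite /= (HW _ (ltn_addr n1 (flag_right_lt R))) sum_params_flag_right.
  by rewrite (flagsetP (f a)) (holds0E t ar0).
- exact: splits_rel (splits_sym hsplit).
- by move=> i; case: eqP.
- by move=> k /fv2n kn; rewrite sum_params_right.
Qed.

Lemma sum_formula_orders :
  has_free_vars phi1 n1 -> has_free_vars phi2 n2 ->
  linear_order (phi_rel phi1 Ps1) -> linear_order (phi_rel phi2 Ps2) ->
  linear_order (phi_rel (sum_formula phi1 n1 phi2) sum_params).
Proof.
move=> free1 free2 ord1 ord2.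
have lin1 : linear_on (mem left_part) left_rel.
  by apply: linear_on_image (left_rel_sat free1) ord1 => d /left_partP.
have lin2 : linear_on (fun d => d \notin left_part) right_rel.
  by apply: linear_on_image (right_rel_sat free2) ord2 => d /right_partP.
apply: (linear_lex_sum lin1 lin2) => x y; rewrite /phi_rel /=.
split=> [[[xl /negP yr]|[[[xl yl] r]|[[/negP xr /negP yr] r]]]|].
- exact: Or31.
- exact: Or32.
- exact: Or33.
by case=> [[xl /negP yr]|[xl yl r]|[/negP xr /negP yr r]];
  [left|right; left|right; right].
Qed.

End SumOrder.

(* Translation of a formula about a disjoint union D = A (+) B into a formula
   about A, with the finite structure B hardwired into it. The environment
   sg says which first-order variables denote elements of B (sg i = Some b) and
   rh gives the part of each set variable lying in B. *)
Fixpoint hardwire S (B : structure S) (sg : nat -> option (carrier B))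
    (rh : nat -> {set carrier B}) (g : formula S) : formula S :=
  match g with
  | FRel R xs =>
      FOr (if all (fun i => sg i == None) xs then FRel xs else cst S false)
          (cst S [exists tb : (arity R).-tuple (carrier B),
                     (map_tuple Some tb == map_tuple sg xs) && srel tb])
  | FEq i j =>
      match sg i, sg j with
      | None, None => FEq S i j
      | Some b, Some b' => cst S (b == b')
      | _, _ => cst S false
      end
  | FIn i k => if sg i is Some b then cst S (b \in rh k) else FIn S i k
  | FNot g => FNot (hardwire sg rh g)
  | FAnd g h => FAnd (hardwire sg rh g) (hardwire sg rh h)
  | FOr g h => FOr (hardwire sg rh g) (hardwire sg rh h)
  | FEx1 i g => FOr (FEx1 i (hardwire (upd sg i None) rh g))
                    (FBigOr (fun b => hardwire (upd sg i (Some b)) rh g))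
  | FEx2 k g => FEx2 k (FBigOr (fun P => hardwire sg (upd rh k P) g))
  end.

Lemma hardwire_fv1 S (B : structure S) g sg rh x :
  x \in fv1 (hardwire (B := B) sg rh g) -> x \in fv1 g /\ sg x = None.
Proof.
elim: g sg rh => [R xs|i j|i k|g IH|g IHg h IHh|g IHg h IHh|i g IH|k g IH] sg rh /=.
- rewrite (proj1 (fv_cst _ _)) cats0; case: ifP => // Hall xin; split=> //.
  exact/eqP/(allP Hall).
- case si: (sg i) => [b|]; case sj: (sg j) => [b'|]; rewrite ?(proj1 (fv_cst _ _)) //.
  by rewrite !inE => /orP [] /eqP ->; rewrite ?si ?sj /= ?eqxx ?orbT.
- by case si: (sg i) => [b|]; rewrite ?(proj1 (fv_cst _ _)) // inE => /eqP ->.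
- exact: IH.
- by rewrite !mem_cat => /orP [/IHg|/IHh] [-> ->]; rewrite ?orbT.
- by rewrite !mem_cat => /orP [/IHg|/IHh] [-> ->]; rewrite ?orbT.
- rewrite mem_cat => /orP [|/(proj1 (fv_FBigOr _ _)) [b /IH [xg]]].
    rewrite mem_filter => /andP [xi /IH [xg]].
    by rewrite mem_filter xi xg /upd (negbTE xi).
  by rewrite /upd; case: eqP => // /eqP xi sx; rewrite mem_filter xi xg.
- by move/(proj1 (fv_FBigOr _ _)) => [P /IH].
Qed.

Lemma hardwire_fv2 S (B : structure S) g sg rh x :
  x \in fv2 (hardwire (B := B) sg rh g) -> x \in fv2 g.
Proof.
elim: g sg rh => [R xs|i j|i k|g IH|g IHg h IHh|g IHg h IHh|i g IH|k g IH] sg rh /=.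
- by rewrite (proj2 (fv_cst _ _)) cats0; case: ifP.
- by case: (sg i) => [b|]; case: (sg j) => [b'|]; rewrite ?(proj2 (fv_cst _ _)).
- by case: (sg i) => [b|]; rewrite ?(proj2 (fv_cst _ _)).
- exact: IH.
- by rewrite !mem_cat => /orP [/IHg|/IHh] ->; rewrite ?orbT.
- by rewrite !mem_cat => /orP [/IHg|/IHh] ->; rewrite ?orbT.
- by rewrite mem_cat => /orP [/IH|/(proj2 (fv_FBigOr _ _)) [b /IH]].
- by rewrite !mem_filter => /andP [xk /(proj2 (fv_FBigOr _ _)) [P /IH ->]]; rewrite xk.
Qed.

Lemma map_eq_iff (X Y Z : Type) (g : X -> Y) (h : Z -> Y) (g' : X -> option Z) :
  (forall x z, g x = h z <-> g' x = Some z) ->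
  forall s t, map g s = map h t <-> map g' s = map Some t.
Proof.
move=> H; elim=> [|x s IH] [|z t] //=; split=> [[e1 e2]|[e1 e2]].
- by rewrite (proj1 (H x z) e1) (proj1 (IH t) e2).
- by rewrite (proj2 (H x z) e1) (proj2 (IH t) e2).
Qed.

Section HardwireSemantics.
Variables (S : signature) (D A B : structure S).
Variables (e : carrier A -> carrier D) (f : carrier B -> carrier D).
Hypothesis hsplit : splits D A B e f.

Definition denotes (sg : nat -> option (carrier B)) (v : nat -> carrier A)
    (w : nat -> carrier D) : Prop :=
  forall i, w i = if sg i is Some b then f b else e (v i).

Definition set_denotes (V : nat -> {set carrier A}) (rh : nat -> {set carrier B})
    (W : nat -> {set carrier D}) (k : nat) : Prop :=
  (forall a, (e a \in W k) = (a \in V k)) /\ (forall b, (f b \in W k) = (b \in rh k)).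

Lemma denotes_updA sg v w i a :
  denotes sg v w -> denotes (upd sg i None) (upd v i a) (upd w i (e a)).
Proof. by move=> Hw j; rewrite /upd; case: eqP. Qed.

Lemma denotes_updB sg v w i b :
  denotes sg v w -> denotes (upd sg i (Some b)) v (upd w i (f b)).
Proof. by move=> Hw j; rewrite /upd; case: eqP. Qed.

Lemma set_denotes_upd V rh W k (P : {set carrier A}) (Q : {set carrier B})
    (P' : {set carrier D}) j :
  (forall a, (e a \in P') = (a \in P)) -> (forall b, (f b \in P') = (b \in Q)) ->
  (j != k -> set_denotes V rh W j) ->
  set_denotes (upd V k P) (upd rh k Q) (upd W k P') j.
Proof. by rewrite /set_denotes /upd; case: eqP => // _ ? ? /(_ isT). Qed.

(* An atomic formula R(x_..) holds in D iff all its arguments lie in A and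
   the relation holds there, or all lie in B and it holds there. *)
Lemma hardwire_rel_sat R (xs : (arity R).-tuple nat) sg rh v V w :
  denotes sg v w ->
  (srel (map_tuple w xs) <-> sat v V (hardwire (B := B) sg rh (FRel xs))).
Proof.
case: hsplit => ei fi dis _ Hrel Hw.
have inB x b : w x = f b <-> sg x = Some b.
  rewrite Hw; case: (sg x) => [b'|]; last by split=> // /dis.
  by split=> [/fi ->|[->]].
have partB : (exists tb, map_tuple w xs = map_tuple f tb /\ srel tb) <->
    [exists tb : (arity R).-tuple (carrier B),
       (map_tuple Some tb == map_tuple sg xs) && srel tb].
  split=> [[tb [/(congr1 val) /= E r]]|].
    apply/existsP; exists tb; rewrite r andbT; apply/eqP/val_inj => /=.
    by symmetry; apply/(map_eq_iff inB).
  case/existsP=> tb /andP [/eqP /(congr1 val) /= E r].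
  by exists tb; split => //; apply/val_inj => /=; apply/(map_eq_iff inB).
have partA : (exists ta, map_tuple w xs = map_tuple e ta /\ srel ta) <->
    sat v V (if all (fun i => sg i == None) xs then FRel xs else cst S false).
  case: ifP => [allA|/negbT /allPn [x xin]].
    have -> : map_tuple w xs = map_tuple e (map_tuple v xs).
      apply/val_inj => /=; rewrite -map_comp.
      by apply/eq_in_map => x /(allP allA) /eqP sx; rewrite Hw sx.
    split=> [[ta [E r]]|r]; last by exists (map_tuple v xs).
    rewrite /=; suff -> : map_tuple v xs = ta by [].
    exact/val_inj/(inj_map ei)/(congr1 val E).
  case sx: (sg x) => [b|] // _; rewrite sat_cst.
  split=> // [[ta [/(congr1 val) /= E _]]].
  have : w x \in map w xs by apply: map_f.
  by rewrite E (proj2 (inB x b) sx) => /mapP [a _ /esym /dis].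
rewrite Hrel /= sat_cst -partA -partB.
by split=> [] [] [t [E r]]; [left|right|left|right]; exists t; rewrite E.
Qed.

Lemma hardwire_sat g sg rh v V w W :
  denotes sg v w -> (forall k, k \in fv2 g -> set_denotes V rh W k) ->
  (sat w W g <-> sat v V (hardwire (B := B) sg rh g)).
Proof.
case: (hsplit) => ei fi dis cov _.
elim: g sg rh v V w W => [R xs|i j|i k|g IH|g IHg h IHh|g IHg h IHh|i g IH|k g IH]
  sg rh v V w W Hw HW /=.
- exact: hardwire_rel_sat.
- rewrite !Hw; case: (sg i) => [b|]; case: (sg j) => [b'|]; rewrite ?sat_cst.
  + by split=> [/fi ->|/eqP ->].
  + by split=> // /esym /dis.
  + by split=> // /dis.
  + by split=> [/ei|->].
- have [HA HB] := HW k (mem_head _ _).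
  by rewrite Hw; case: (sg i) => [b|]; rewrite ?sat_cst /= ?HA ?HB.
- by rewrite (IH sg rh v V w W).
- rewrite (IHg sg rh v V w W) // ?(IHh sg rh v V w W) // => k kin; apply: HW;
    by rewrite mem_cat kin ?orbT.
- rewrite (IHg sg rh v V w W) // ?(IHh sg rh v V w W) // => k kin; apply: HW;
    by rewrite mem_cat kin ?orbT.
- rewrite sat_FBigOr; split=> [[d]|[[a]|[b]]].
  + case: (cov d) => [[a ->]|[b ->]].
      by move/IH=> Ha; left; exists a; apply: Ha => //; apply: denotes_updA.
    by move/IH=> Hb; right; exists b; apply: Hb => //; apply: denotes_updB.
  + by move/IH=> Ha; exists (e a); apply: Ha => //; apply: denotes_updA.
  + by move/IH=> Hb; exists (f b); apply: Hb => //; apply: denotes_updB.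
- have HW' j : j \in fv2 g -> j != k -> set_denotes V rh W j.
    by move=> jin jk; apply: HW; rewrite mem_filter jk.
  split=> [[P' Hg]|[P /sat_FBigOr [Q Hg]]].
    exists (e @^-1: P'); apply/sat_FBigOr; exists (f @^-1: P').
    rewrite -(IH _ _ _ _ w (upd W k P')) // => j /HW'.
    by apply: set_denotes_upd => x; rewrite inE.
  have [HA HB] := splits_set hsplit P Q.
  exists (e @: P :|: f @: Q).
  rewrite (IH sg (upd rh k Q) v (upd V k P)) // => j /HW'.
  exact: set_denotes_upd.
Qed.

End HardwireSemantics.

(* The formula ordering the summand A of a disjoint union A (+) B, obtained from
   a formula phi with n parameters ordering A (+) B: the B-parts t of the
   parameters are hardwired, the right tuple t being selected by the
   non-emptiness of an extra parameter X_(n + rank t). *)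
Definition summand_formula S (B : structure S) (phi : formula S) (n : nat) : formula S :=
  FBigOr (fun t : n.-tuple {set carrier B} =>
    FAnd (nonempty S (n + enum_rank t))
         (hardwire (fun _ => None) (fun k => nth set0 t k) phi)).

Lemma summand_formula_free S (B : structure S) phi n :
  has_free_vars phi n ->
  has_free_vars (summand_formula B phi n) (n + #|(n.-tuple {set carrier B} : finType)|).
Proof.
move=> /andP [/allP fv1n /allP fv2n]; apply/andP; split; apply/allP=> x.
- by move/(proj1 (fv_FBigOr _ _)) => [t] /= /hardwire_fv1 [/fv1n].
- move/(proj2 (fv_FBigOr _ _)) => [t]; rewrite /= inE.
  case/orP=> [/eqP ->|/hardwire_fv2 /fv2n xn]; first by rewrite ltn_add2l rank_lt.
  exact: leq_trans xn (leq_addr _ _).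
Qed.

(* If phi orders the disjoint union D of a non-empty A and B, the summand
   formula orders A: it defines the restriction of the order of D to A. *)
Lemma summand_orders S (D A B : structure S) (e : carrier A -> carrier D)
    (f : carrier B -> carrier D) (phi : formula S) (n : nat) (a0 : carrier A)
    (PsD : seq {set carrier D}) :
  splits D A B e f -> has_free_vars phi n -> linear_order (phi_rel phi PsD) ->
  exists PsA : seq {set carrier A},
    size PsA = n + #|(n.-tuple {set carrier B} : finType)| /\
    linear_order (phi_rel (summand_formula B phi n) PsA).
Proof.
move=> hsplit /andP [_ /allP fv2n] ordD; have [ei _ _ _ _] := hsplit.
pose t0 : n.-tuple {set carrier B} := [tuple f @^-1: nth set0 PsD i | i < n].
pose N := n + #|(n.-tuple {set carrier B} : finType)|.
pose PsA := mkseq (fun k => if k < n then e @^-1: nth set0 PsD k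
                            else flagset _ (k - n == enum_rank t0)) N.
exists PsA; split; first by rewrite size_mkseq.
have selected (t : n.-tuple {set carrier B}) :
    (exists x, x \in nth set0 PsA (n + enum_rank t)) <-> t = t0.
  rewrite nth_mkseq ?ltn_add2l ?rank_lt // ltnNge leq_addr addKn (flagsetP a0).
  by split=> [/eqP /val_inj /enum_rank_inj|->].
have hardwired a b :
    sat (fun i => if i == 0 then a else b) (nth set0 PsA)
        (hardwire (fun _ => None) (nth set0 t0) phi) <-> phi_rel phi PsD (e a) (e b).
  symmetry; apply: (hardwire_sat hsplit) => [i|k /fv2n kn]; first by case: eqP.
  split=> [x|y]; first by rewrite nth_mkseq ?kn ?inE // /N ltn_addr.
  by rewrite -[k]/(nat_of_ord (Ordinal kn)) nth_mktuple inE.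
apply: (linear_order_pullback ei ordD) => a b.
rewrite -hardwired /phi_rel sat_FBigOr.
by split=> [[t [/selected -> //]]|Ht]; exists t0; split=> //; apply/selected.
Qed.

Lemma orderable_sub S (C X : sclass S) :
  (forall A, C A -> X A) -> MSO_orderable X -> MSO_orderable C.
Proof.
by move=> CX [phi [n [free ord]]]; exists phi, n; split=> // A /CX; apply: ord.
Qed.

Definition with_empty S (C : sclass S) : sclass S := fun A => C A \/ (carrier A -> False).

Lemma with_empty_order S (C : sclass S) phi n A :
  defines_order phi n C -> with_empty C A ->
  exists Ps : seq {set carrier A}, linear_order (phi_rel phi Ps).
Proof.
move=> ord [CA|none]; last by exists [::]; apply: linear_order_empty.
case: (pickP (fun _ : carrier A => true)) => [a _|none].
  by have [Ps [_ lin]] := ord A CA (ex_intro _ a I); exists Ps.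
by exists [::]; apply: linear_order_empty => a; have := none a.
Qed.

Lemma orderable_of_splits S (C K X : sclass S) :
  MSO_orderable C -> MSO_orderable K ->
  (forall D, X D -> exists (A B : structure S) (e : carrier A -> carrier D)
                          (f : carrier B -> carrier D),
       [/\ splits D A B e f, with_empty C A & with_empty K B]) ->
  MSO_orderable X.
Proof.
move=> [phi1 [n1 [free1 ord1]]] [phi2 [n2 [free2 ord2]]] XCK.
exists (sum_formula phi1 n1 phi2), (ngadgets S + n1 + n2).
split=> [|D /XCK [A [B [e [f [hsplit CA KB]]]]] _]; first exact: sum_formula_free.
have [Ps1 lin1] := with_empty_order ord1 CA.
have [Ps2 lin2] := with_empty_order ord2 KB.
exists (sum_params e f n1 n2 Ps1 Ps2); split; first exact: size_sum_params.
exact: sum_formula_orders.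
Qed.

Lemma orderable_summand S (C X : sclass S) (B : structure S) :
  MSO_orderable X ->
  (forall A, C A -> exists (D : structure S) (e : carrier A -> carrier D)
                          (f : carrier B -> carrier D), X D /\ splits D A B e f) ->
  MSO_orderable C.
Proof.
move=> [phi [n [free ord]]] CX.
exists (summand_formula B phi n), (n + #|(n.-tuple {set carrier B} : finType)|).
split=> [|A /CX [D [e [f [XD hsplit]]]] [a _]]; first exact: summand_formula_free.
have [PsD [_ linD]] := ord D XD (ex_intro _ (e a) I).
exact: summand_orders a PsD hsplit free linD.
Qed.

Theorem proposition3p5 (S : signature) (C K : sclass S) :
  (exists A, C A) -> (exists B, K B) ->
  (MSO_orderable (class_union C K) <-> MSO_orderable C /\ MSO_orderable K) /\
  (MSO_orderable (class_sum C K) <-> MSO_orderable C /\ MSO_orderable K).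
Proof.
move=> [A0 CA0] [B0 KB0].
have sumCK A B : C A -> K B -> class_sum C K (dunion A B) by exists A, B.
have void_empty : carrier (empty_structure S) -> False by case.
split; split.
- by move=> ord; split; apply: orderable_sub ord => A; [left|right].
- case=> ordC ordK.
  apply: (orderable_of_splits (X := class_union C K) ordC ordK) => D [CD|KD].
    by exists D, (empty_structure S), id, (@of_void _); split;
      [exact: splits_empty|left|right].
  by exists (empty_structure S), D, (@of_void _), id; split;
    [exact/splits_sym/splits_empty|right|left].
- move=> ord; split.
    apply: (orderable_summand (B := B0) ord) => A CA.
    by exists (dunion A B0), inl, inr; split; [exact: sumCK|exact: dunion_splits].
  apply: (orderable_summand (B := A0) ord) => B KB.
  exists (dunion A0 B), inr, inl.
  by split; [exact: sumCK|exact/splits_sym/dunion_splits].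
- case=> ordC ordK.
  apply: (orderable_of_splits (X := class_sum C K) ordC ordK).
  move=> _ [A [B [CA [KB ->]]]].
  by exists A, B, inl, inr; split; [exact: dunion_splits|left|left].
Qed.
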